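(* Let $F$ be a field of characteristic not $2$ and $V=U^\vee\oplus V_0\oplus U$ a non-degenerate quadratic space with $U,U^\vee$ isotropic, in duality, $V_0=(U^\vee\oplus U)^\perp$, and assume $V_0$ is anisotropic. Let $W=V\oplus V_0^-$, $X=\Delta(V_0)\oplus U$ with $\Delta(V_0)=\{((0,v,0),v):v\in V_0\}$, $P_X\subseteq\mathrm{SO}(W)$ the stabilizer of $X$, and $H=\mathrm{SO}(V)\times\mathrm{SO}(V_0^-)\subseteq\mathrm{SO}(W)$. Then $P_X(F)\backslash\mathrm{SO}(W)(F)/H(F)$ is a single point, i.e. $\mathrm{SO}(W)(F)=P_X(F)H(F)$.
   Context: $V_0^-$ denotes $V_0$ with the negated quadratic form; $W=V\oplus V_0^-$ is an orthogonal direct sum, and $X$ is a maximal isotropic subspace of $W$. $\mathrm{SO}$ groups act on the right. *)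

(* Quadratic spaces in coordinates: vectors are row vectors,
   a quadratic space is F^n ('rV_n) with a symmetric Gram matrix B,
   b(v,w) = v *m B *m w^T, Q(v) = b(v,v).  Subspaces are row spaces (%MS).
   Groups act on the right: v |-> v *m g. *)
From HB Require Import structures.
From mathcomp Require Import all_boot all_order all_algebra.
Set Implicit Arguments. Unset Strict Implicit. Unset Printing Implicit Defensive.
Import GRing.Theory.
Local Open Scope ring_scope.

Definition isometry_mx (F : fieldType) n (B g : 'M[F]_n) : bool :=
  g *m B *m g^T == B.

Definition SO_mx (F : fieldType) n (B g : 'M[F]_n) : bool :=
  isometry_mx B g && (\det g == 1).

Definition orth_mx (F : fieldType) n k (B : 'M[F]_n) (A : 'M[F]_(k, n)) :=
  kermx (B *m A^T).

Definition anisotropic_mx (F : fieldType) n m (B : 'M[F]_n) (E : 'M[F]_(m, n)) :=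
  forall x : 'rV[F]_m, x != 0 -> (x *m E) *m B *m (x *m E)^T != 0.

(* Gram matrix of V_0^- in the basis E0 of V_0 *)
Definition neg_gram (F : fieldType) n m (B : 'M[F]_n) (E0 : 'M[F]_(m, n)) : 'M[F]_m :=
  - (E0 *m B *m E0^T).

Definition W_gram (F : fieldType) n m (B : 'M[F]_n) (E0 : 'M[F]_(m, n)) : 'M[F]_(n + m) :=
  block_mx B 0 0 (neg_gram B E0).

(* X = Delta(V_0) (+) U : rows ((x E0, x)) and ((u, 0)) *)
Definition X_mx (F : fieldType) n m r (E0 : 'M[F]_(m, n)) (U : 'M[F]_(r, n))
  : 'M[F]_(m + r, n + m) :=
  col_mx (row_mx E0 1%:M) (row_mx U 0).

Definition PX_mx (F : fieldType) n m r (B : 'M[F]_n) (E0 : 'M[F]_(m, n))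
  (U : 'M[F]_(r, n)) (g : 'M[F]_(n + m)) : bool :=
  SO_mx (W_gram B E0) g && (X_mx E0 U *m g == X_mx E0 U)%MS.

Definition H_mx (F : fieldType) n m (B : 'M[F]_n) (E0 : 'M[F]_(m, n))
  (g : 'M[F]_(n + m)) : Prop :=
  exists (h1 : 'M[F]_n) (h2 : 'M[F]_m),
    [/\ SO_mx B h1, SO_mx (neg_gram B E0) h2 & g = block_mx h1 0 0 h2].

From HB Require Import structures.
From mathcomp Require Import all_boot all_order all_algebra.
Set Implicit Arguments. Unset Strict Implicit. Unset Printing Implicit Defensive.
Import GRing.Theory.
Local Open Scope ring_scope.

(* If g is in SO(W), then Y = X g is again a maximal isotropic subspace of W.
   Since V_0 is anisotropic, Y projects onto V_0^-, so Y is spanned by rows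
   (T, 1) and (A, 0) with T an isometric copy of V_0 in V and A an
   r-dimensional isotropic subspace orthogonal to T.  A Witt-type completion
   (using 2 != 0) of A to a hyperbolic partner orthogonal to T yields
   h1 in O(V) carrying V_0 to T and U to A, so that X diag(h1, 1) = Y.
   Then p = g diag(h1, 1)^-1 stabilizes the maximal isotropic X; in a
   hyperbolic basis adapted to X such a p is block triangular with diagonal
   blocks a and (a^T)^-1, so det p = 1, which forces det h1 = 1. *)

Section BilinearForms.
Variable F : fieldType.

Lemma form_tr n p q (B : 'M[F]_n) (a : 'M_(p, n)) (b : 'M_(q, n)) :
  B^T = B -> (a *m B *m b^T)^T = b *m B *m a^T.
Proof. by move=> sB; rewrite !trmx_mul trmxK sB mulmxA. Qed.

Lemma form_mulml n p q s (B : 'M[F]_n) (c : 'M_(p, q)) (a : 'M_(q, n)) (b : 'M_(s, n)) :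
  c *m a *m B *m b^T = c *m (a *m B *m b^T).
Proof. by rewrite !mulmxA. Qed.

Lemma form_mulmr n p q s (B : 'M[F]_n) (a : 'M_(p, n)) (c : 'M_(s, q)) (b : 'M_(q, n)) :
  a *m B *m (c *m b)^T = a *m B *m b^T *m c^T.
Proof. by rewrite trmx_mul !mulmxA. Qed.

Lemma form_row_block n m p q (B : 'M[F]_n) (N : 'M_m) (a : 'M_(p, n)) (x : 'M_(p, m))
    (b : 'M_(q, n)) (y : 'M_(q, m)) :
  row_mx a x *m block_mx B 0 0 N *m (row_mx b y)^T = a *m B *m b^T + x *m N *m y^T.
Proof. by rewrite mul_row_block !mulmx0 addr0 add0r tr_row_mx mul_row_col. Qed.

Lemma isotropic_submx N k p q (W : 'M[F]_N) (Y : 'M_(k, N))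
    (S : 'M_(p, N)) (S' : 'M_(q, N)) :
  Y *m W *m Y^T = 0 -> (S <= Y)%MS -> (S' <= Y)%MS -> S *m W *m S'^T = 0.
Proof.
move=> isoY /submxP[C ->] /submxP[C' ->].
by rewrite form_mulmr form_mulml isoY mulmx0 mul0mx.
Qed.

Lemma row_free_mul_unit p n (A : 'M[F]_(p, n)) (Z : 'M_(n, p)) :
  A *m Z \in unitmx -> row_free A.
Proof.
by move=> AZu; apply/row_freeP; exists (Z *m invmx (A *m Z)); rewrite mulmxA mulmxV.
Qed.

Lemma exists_row_base p q k (A : 'M[F]_(p, q)) :
  \rank A = k -> exists2 Z : 'M_(k, q), (Z :=: A)%MS & row_free Z.
Proof. by move=> <-; exists (row_base A); [exact: eq_row_base | exact: row_base_free]. Qed.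

Lemma isometry_unit n (B g : 'M[F]_n) :
  B \in unitmx -> g *m B *m g^T = B -> g \in unitmx.
Proof.
move=> Bu gB; move: Bu; rewrite !unitmxE -{1}gB !det_mulmx det_tr.
by rewrite !unitrM => /andP[/andP[-> _] _].
Qed.

Lemma isometry_mul n (B g h : 'M[F]_n) :
  g *m B *m g^T = B -> h *m B *m h^T = B -> (g *m h) *m B *m (g *m h)^T = B.
Proof. by move=> gB hB; rewrite trmx_mul !mulmxA -(mulmxA g h) -(mulmxA g) hB gB. Qed.

Lemma isometry_inv n (B g : 'M[F]_n) :
  g \in unitmx -> g *m B *m g^T = B -> invmx g *m B *m (invmx g)^T = B.
Proof.
move=> gu gB; rewrite -{1}gB trmx_inv !mulmxA mulVmx // mul1mx.
by rewrite -mulmxA mulmxV ?unitmx_tr ?mulmx1.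
Qed.

Lemma isometry_block n m (B h1 : 'M[F]_n) (N h2 : 'M[F]_m) :
  h1 *m B *m h1^T = B -> h2 *m N *m h2^T = N ->
  block_mx h1 0 0 h2 *m block_mx B 0 0 N *m (block_mx h1 0 0 h2)^T = block_mx B 0 0 N.
Proof.
move=> h1B h2N; rewrite tr_block_mx !trmx0 !mulmx_block.
by rewrite !(mulmx0, mul0mx, addr0, add0r) h1B h2N.
Qed.

Lemma SO_mx_mul n (B p h : 'M[F]_n) : SO_mx B p -> SO_mx B h -> SO_mx B (p *m h).
Proof.
case/andP=> /eqP pB /eqP dp /andP[/eqP hB /eqP dh].
by rewrite /SO_mx /isometry_mx isometry_mul // det_mulmx dp dh mulr1 !eqxx.
Qed.

Lemma SO_mx_block n m (B h1 : 'M[F]_n) (N h2 : 'M[F]_m) :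
  SO_mx B h1 -> SO_mx N h2 -> SO_mx (block_mx B 0 0 N) (block_mx h1 0 0 h2).
Proof.
case/andP=> /eqP h1B /eqP d1 /andP[/eqP h2N /eqP d2].
by rewrite /SO_mx /isometry_mx isometry_block // det_ublock d1 d2 mulr1 !eqxx.
Qed.

Lemma anisotropic_gram_unit n m (B : 'M[F]_n) (E : 'M[F]_(m, n)) :
  anisotropic_mx B E -> E *m B *m E^T \in unitmx.
Proof.
move=> anE; rewrite -row_free_unit; apply/inj_row_free => x xG0.
apply/eqP/negPn/negP => /anE; rewrite trmx_mul !mulmxA.
by move: xG0; rewrite !mulmxA => ->; rewrite mul0mx eqxx.
Qed.

Lemma neg_gram_anisotropic n m (B : 'M[F]_n) (E : 'M[F]_(m, n)) :
  anisotropic_mx B E -> forall x : 'rV_m, x != 0 -> x *m neg_gram B E *m x^T != 0.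
Proof.
move=> anE x /anE; rewrite /neg_gram mulmxN mulNmx oppr_eq0.
by rewrite form_mulmr !mulmxA.
Qed.

End BilinearForms.

Section Lagrangians.
Variable F : fieldType.

Lemma lagrangian_orth_submx k N (W : 'M[F]_N) (Y : 'M_(k, N)) :
  N = (k + k)%N -> W \in unitmx -> row_free Y -> Y *m W *m Y^T = 0 ->
  (kermx (W *m Y^T) <= Y)%MS.
Proof.
move=> dimN Wu freeY isoY; subst N.
have YsubK : (Y <= kermx (W *m Y^T))%MS by rewrite sub_kermx mulmxA isoY.
rewrite -(geq_leqif (mxrank_leqif_sup YsubK)) mxrank_ker.
rewrite -mxrank_tr trmx_mul trmxK mxrankMfree ?row_free_unit ?unitmx_tr //.
by move/eqP: freeY => ->; rewrite addnK.
Qed.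

Lemma lagrangian_dual k (W : 'M[F]_(k + k)) (X : 'M_(k, k + k)) :
  W \in unitmx -> W^T = W -> row_free X -> X *m W *m X^T = 0 ->
  exists2 L : 'M_(k, k + k), X *m W *m L^T = 1%:M & col_mx X L \in unitmx.
Proof.
move=> Wu sW freeX isoX.
have : ((1%:M : 'M[F]_k) <= (X *m W)^T)%MS.
  by apply: submx_full; rewrite /row_full mxrank_tr mxrankMfree ?row_free_unit.
case/submxP => L XWL.
have XWL1 : X *m W *m L^T = 1%:M by rewrite -[X *m W]trmxK -trmx_mul -XWL trmx1.
have LWX : L *m W *m X^T = 1%:M by rewrite -form_tr // XWL1 trmx1.
exists L => //.
rewrite -row_free_unit; apply/inj_row_free => v.
rewrite -[v]hsubmxK mul_row_col => vQ0.
have vr0 : rsubmx v = 0.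
  have := congr1 (mulmx^~ (W *m X^T)) vQ0.
  by rewrite mul0mx mulmxDl -!mulmxA !(mulmxA _ W) isoX LWX mulmx0 mulmx1 add0r.
move/eqP: vQ0; rewrite vr0 mul0mx addr0 mulmx_free_eq0 // => /eqP ->.
by rewrite row_mx0.
Qed.

Lemma det_hyperbolic_isometry k (a c d e : 'M[F]_k) :
  let P := block_mx a 0 c d in let G := block_mx 0 1%:M 1%:M e in
  P *m G *m P^T = G -> \det P = 1.
Proof.
rewrite /= tr_block_mx trmx0 !mulmx_block => /eq_block_mx[_ + _ _].
rewrite !(mulmx0, mul0mx, mulmx1, addr0, add0r) => adT.
by rewrite det_lblock -(det_tr d) -det_mulmx adT det1.
Qed.

Lemma det_lagrangian_stabilizer k N (W q : 'M[F]_N) (X : 'M_(k, N)) :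
  N = (k + k)%N -> W \in unitmx -> W^T = W -> row_free X -> X *m W *m X^T = 0 ->
  q *m W *m q^T = W -> (X *m q <= X)%MS -> \det q = 1.
Proof.
move=> dimN; subst N => Wu sW freeX isoX qW /submxP[D XqD].
have [L XWL Qu] := lagrangian_dual Wu sW freeX isoX.
have LWX : L *m W *m X^T = 1%:M by rewrite -form_tr // XWL trmx1.
set Q := col_mx X L; set P := Q *m q *m invmx Q.
have QqP : Q *m q = P *m Q by rewrite mulmxKV.
have P_ur0 : ursubmx P = 0.
  have := congr1 usubmx QqP.
  rewrite -[P]submxK mul_block_col mul_col_mx !col_mxKu XqD => XqP.
  have : row_mx (ulsubmx P - D) (ursubmx P) *m Q = 0.
    by rewrite mul_row_col mulmxBl addrAC -XqP subrr.
  move/eqP; rewrite mulmx_free_eq0 ?row_free_unit // row_mx_eq0.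
  by rewrite block_mxKur => /andP[_ /eqP].
have QWQ : Q *m W *m Q^T = block_mx 0 1%:M 1%:M (L *m W *m L^T).
  by rewrite tr_col_mx mul_col_mx mul_col_mx !mul_mx_row isoX XWL LWX -block_mxEv.
have PGP : P *m (Q *m W *m Q^T) *m P^T = Q *m W *m Q^T.
  move: (congr1 (fun M => M *m W *m M^T) QqP); rewrite !trmx_mul !mulmxA => <-.
  by rewrite -(mulmxA Q q) -(mulmxA Q) qW.
move: PGP; rewrite QWQ -[P]submxK P_ur0 => /det_hyperbolic_isometry.
rewrite -P_ur0 submxK /P !det_mulmx det_inv mulrAC mulfV ?mul1r //.
by rewrite -unitfE -unitmxE.
Qed.

End Lagrangians.

Section Anisotropic.
Variables (F : fieldType) (n m : nat) (B : 'M[F]_n) (N : 'M[F]_m).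
Hypothesis anisoN : forall x : 'rV_m, x != 0 -> x *m N *m x^T != 0.

Lemma anisotropic_lagrangian_rsubmx_full k (Y : 'M_(k, n + m)) :
  Y *m block_mx B 0 0 N *m Y^T = 0 -> (kermx (block_mx B 0 0 N *m Y^T) <= Y)%MS ->
  row_full (rsubmx Y).
Proof.
move=> isoY orthY.
have freeNY : row_free (N *m (rsubmx Y)^T).
  apply/inj_row_free => y yNY.
  have yY : (row_mx 0 y <= Y)%MS.
    apply: submx_trans orthY; rewrite sub_kermx mulmxA -[Y]hsubmxK.
    by rewrite form_row_block !mul0mx add0r -mulmxA yNY.
  have := isotropic_submx isoY yY yY; rewrite form_row_block !mul0mx add0r.
  by move=> yNy; apply/eqP/negPn/negP => /anisoN; rewrite yNy eqxx.
rewrite /row_full eqn_leq rank_leq_col; move/eqP: freeNY => {1}<-.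
by rewrite -(mxrank_tr (rsubmx Y)) mxrankM_maxr.
Qed.

Lemma anisotropic_lagrangian_basis r (Y : 'M_(m + r, n + m)) :
  row_free Y -> Y *m block_mx B 0 0 N *m Y^T = 0 ->
  (kermx (block_mx B 0 0 N *m Y^T) <= Y)%MS ->
  exists T : 'M_(m, n), exists A : 'M_(r, n),
    [/\ (row_mx T 1%:M <= Y)%MS, (row_mx A 0 <= Y)%MS & row_free A].
Proof.
move=> freeY isoY orthY.
have fullY2 := anisotropic_lagrangian_rsubmx_full isoY orthY.
have /submxP[D DY2] : ((1%:M : 'M_m) <= rsubmx Y)%MS by exact: submx_full.
have rankK : \rank (kermx (rsubmx Y)) = r.
  by rewrite mxrank_ker (eqP fullY2) addKn.
have [Kb eqKb freeKb] := exists_row_base rankK.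
have KbY2 : Kb *m rsubmx Y = 0 by apply/sub_kermxP; rewrite eqKb.
exists (D *m lsubmx Y), (Kb *m lsubmx Y); split.
- by rewrite DY2 -mul_mx_row hsubmxK submxMl.
- by rewrite -KbY2 -mul_mx_row hsubmxK submxMl.
apply/inj_row_free => v vA.
have : v *m Kb *m Y = 0.
  by rewrite -[Y]hsubmxK mul_mx_row -!mulmxA vA KbY2 mulmx0 row_mx0.
by move/eqP; rewrite !mulmx_free_eq0 // => /eqP.
Qed.

End Anisotropic.

Section WittExtension.
Variables (F : fieldType) (n : nat) (B : 'M[F]_n).

Lemma form_dual_exists r k (A : 'M_(r, n)) (K : 'M_(k, r)) :
  B \in unitmx -> row_free A -> exists L : 'M_(k, n), L *m B *m A^T = K.
Proof.
move=> Bu freeA; have /submxP[L ->] : (K <= B *m A^T)%MS.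
  apply: submx_full; rewrite /row_full -mxrank_tr trmx_mul trmxK.
  by rewrite mxrankMfree ?row_free_unit ?unitmx_tr.
by exists L; rewrite mulmxA.
Qed.

Lemma orth_correction m k (T : 'M_(m, n)) (L : 'M_(k, n)) :
  T *m B *m T^T \in unitmx -> exists Z, (L - Z *m T) *m B *m T^T = 0.
Proof.
move=> TTu; set Z := L *m B *m T^T *m invmx (T *m B *m T^T); exists Z.
by rewrite !mulmxBl form_mulml mulmxKV // subrr.
Qed.

Lemma isotropic_correction r (A L : 'M_(r, n)) :
  (2%:R : F) != 0 -> B^T = B -> A *m B *m A^T = 0 -> L *m B *m A^T \in unitmx ->
  exists C, (L - C *m A) *m B *m (L - C *m A)^T = 0.
Proof.
move=> two sB AA Ku; set K := L *m B *m A^T; set S := L *m B *m L^T.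
have sS : S^T = S by rewrite form_tr.
have half2 : (2%:R^-1 + 2%:R^-1 : F) = 1 by rewrite -mulr2n -[_ *+ 2]mulr_natr mulVf.
(* C is chosen so that C K^T = K C^T = S / 2. *)
set C := 2%:R^-1 *: (S *m invmx K^T); exists C.
have CK : C *m K^T = 2%:R^-1 *: S by rewrite -scalemxAl mulmxKV ?unitmx_tr.
have KC : K *m C^T = 2%:R^-1 *: S by rewrite -[K]trmxK -trmx_mul CK linearZ /= sS.
rewrite linearB /= trmx_mul !mulmxBl !mulmxBr.
rewrite -!trmx_mul !form_mulmr !form_mulml -/K -(form_tr _ _ sB) -/K AA mulmx0 mul0mx.
by rewrite CK KC subr0 -addrA -opprD -scalerDl half2 scale1r subrr.
Qed.

Lemma witt_complement m r (T : 'M_(m, n)) (A : 'M_(r, n)) (K : 'M_r) :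
  (2%:R : F) != 0 -> B^T = B -> B \in unitmx -> T *m B *m T^T \in unitmx ->
  T *m B *m A^T = 0 -> A *m B *m A^T = 0 -> row_free A -> K \in unitmx ->
  exists A2 : 'M_(r, n),
    [/\ A2 *m B *m A2^T = 0, A2 *m B *m T^T = 0 & A2 *m B *m A^T = K].
Proof.
move=> two sB Bu TTu TA AA freeA Ku.
have [L LK] := form_dual_exists K Bu freeA.
have [Z L1T] := orth_correction L TTu.
have L1K : (L - Z *m T) *m B *m A^T = K.
  by rewrite !mulmxBl form_mulml TA mulmx0 subr0.
have [C isoA2] := isotropic_correction two sB AA (etrans (congr1 _ L1K) Ku).
exists (L - Z *m T - C *m A); split=> //.
  rewrite [_ *m B]mulmxBl mulmxBl L1T form_mulml -form_tr // TA.
  by rewrite trmx0 mulmx0 subrr.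
by rewrite [_ *m B]mulmxBl mulmxBl L1K form_mulml AA mulmx0 subr0.
Qed.

Lemma gram_eq_isometry k (M M' : 'M_(k, n)) :
  row_free M -> row_full M -> M' *m B *m M'^T = M *m B *m M^T ->
  exists2 h, h *m B *m h^T = B & M *m h = M'.
Proof.
move=> freeM fullM gramM.
exists (pinvmx M *m M'); last by rewrite mulmxA mulmxVp ?mul1mx.
rewrite trmx_mul !mulmxA -(mulmxA _ M') -(mulmxA _ (M' *m B)) gramM.
by rewrite !mulmxA mulVpmx // mul1mx -mulmxA -trmx_mul mulVpmx // trmx1 mulmx1.
Qed.

End WittExtension.

Section SplitQuadraticSpace.
Variables (F : fieldType) (n m r : nat).
Variables (B : 'M[F]_n) (Uv U : 'M[F]_(r, n)) (E0 : 'M[F]_(m, n)).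
Hypotheses (two : (2%:R : F) != 0) (sB : B^T = B) (Bu : B \in unitmx).
Hypotheses (freeU : row_free U) (isoU : U *m B *m U^T = 0) (isoUv : Uv *m B *m Uv^T = 0).
Hypothesis Ku : Uv *m B *m U^T \in unitmx.
Hypothesis E0_orth : (E0 :=: orth_mx B (col_mx Uv U))%MS.
Hypothesis V_full : (Uv + E0 + U :=: 1%:M)%MS.
Hypothesis anisoE0 : anisotropic_mx B E0.

Let N0 := E0 *m B *m E0^T.
Let M := col_mx Uv (col_mx E0 U).
Let W := W_gram B E0.
Let X := X_mx E0 U.

Lemma E0_perp :
  [/\ E0 *m B *m Uv^T = 0, E0 *m B *m U^T = 0, Uv *m B *m E0^T = 0 & U *m B *m E0^T = 0].
Proof.
have : (E0 <= orth_mx B (col_mx Uv U))%MS by rewrite E0_orth.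
rewrite /orth_mx => /sub_kermxP; rewrite tr_col_mx !mul_mx_row !mulmxA => /eqP.
rewrite row_mx_eq0 => /andP[/eqP E0Uv /eqP E0U].
by rewrite -(form_tr E0 Uv) // -(form_tr E0 U) // E0Uv E0U trmx0.
Qed.

Lemma basis_free : row_free M.
Proof.
have [E0Uv E0U UvE0 UE0] := E0_perp.
(* Pairing (U^v, V_0, U) against (U, V_0, U^v) gives diag(K, N0, K^T). *)
apply: (@row_free_mul_unit _ _ _ _ (B *m (col_mx U (col_mx E0 Uv))^T)).
rewrite mulmxA !tr_col_mx !mul_col_mx !mul_mx_row.
rewrite isoU isoUv E0Uv E0U UvE0 UE0 row_mx0 -block_mxEv block_mxEh col_mx0.
rewrite -!block_mxEv unitmxE !det_ublock !unitrM -!unitmxE.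
by rewrite -(form_tr Uv U) // unitmx_tr Ku anisotropic_gram_unit.
Qed.

Lemma basis_full : row_full M.
Proof.
rewrite /row_full /M -addsmxE -(adds_eqmx (eqmx_refl Uv) (addsmxE E0 U)).
by rewrite addsmxA V_full mxrank1.
Qed.

Lemma dim_split : n = (r + (m + r))%N.
Proof. exact: etrans (esym (eqP basis_full)) (eqP basis_free). Qed.

Lemma W_unit : W \in unitmx.
Proof.
rewrite unitmxE det_ublock unitrM -!unitmxE Bu /neg_gram -scaleN1r.
by rewrite unitmxE detZ unitrM unitrX ?unitrN1 // -unitmxE anisotropic_gram_unit.
Qed.

Lemma W_sym : W^T = W.
Proof. by rewrite /W /W_gram tr_block_mx !trmx0 sB /neg_gram linearN /= form_tr. Qed.

Lemma X_isotropic : X *m W *m X^T = 0.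
Proof.
have [_ E0U _ UE0] := E0_perp.
rewrite /X /X_mx tr_col_mx mul_col_mx mul_col_mx !mul_mx_row !form_row_block.
rewrite /neg_gram E0U UE0 isoU trmx1 mulmx1 mul1mx addrN !trmx0.
by rewrite !(mulmx0, mul0mx, addr0, add0r) !row_mx0 col_mx0.
Qed.

Lemma X_free : row_free X.
Proof.
apply/inj_row_free => v; rewrite -[v]hsubmxK /X /X_mx mul_row_col !mul_mx_row add_row_mx.
move/eqP; rewrite row_mx_eq0 mulmx1 mulmx0 addr0 => /andP[/eqP + /eqP vl0].
rewrite vl0 mul0mx add0r => /eqP; rewrite mulmx_free_eq0 // => /eqP ->.
by rewrite row_mx0.
Qed.

Lemma dim_W : (n + m = (m + r) + (m + r))%N.
Proof. by rewrite {1}dim_split addnC addnA. Qed.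

Lemma lagrangian_transitive (Y : 'M_(m + r, n + m)) :
  row_free Y -> Y *m W *m Y^T = 0 ->
  exists2 h1, h1 *m B *m h1^T = B & (X *m block_mx h1 0 0 1%:M :=: Y)%MS.
Proof.
move=> freeY isoY; have [E0Uv E0U UvE0 UE0] := E0_perp.
have orthY := lagrangian_orth_submx dim_W W_unit freeY isoY.
have [T [A [TY AY freeA]]] :=
  anisotropic_lagrangian_basis (neg_gram_anisotropic anisoE0) freeY isoY orthY.
have TT : T *m B *m T^T = N0.
  apply/eqP; rewrite -subr_eq0; move: (isotropic_submx isoY TY TY).
  by rewrite form_row_block /neg_gram trmx1 mulmx1 mul1mx => /eqP.
have TA : T *m B *m A^T = 0.
  by move: (isotropic_submx isoY TY AY); rewrite form_row_block trmx0 mulmx0 addr0.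
have AA : A *m B *m A^T = 0.
  by move: (isotropic_submx isoY AY AY); rewrite form_row_block trmx0 mulmx0 addr0.
have TTu : T *m B *m T^T \in unitmx by rewrite TT anisotropic_gram_unit.
have [A2 [A2A2 A2T A2A]] := witt_complement two sB Bu TTu TA AA freeA Ku.
have [h1 h1B Mh1] : exists2 h1, h1 *m B *m h1^T = B & M *m h1 = col_mx A2 (col_mx T A).
  apply: gram_eq_isometry basis_free basis_full _.
  rewrite /M !tr_col_mx !mul_col_mx !mul_mx_row.
  rewrite -(form_tr A2 T) // -(form_tr T A) // -(form_tr A2 A) // -(form_tr Uv U) //.
  by rewrite A2A2 A2T A2A TT TA AA isoUv isoU E0Uv E0U UvE0 UE0 !trmx0.
exists h1 => //.
rewrite /M !mul_col_mx in Mh1; case/eq_col_mx: Mh1 => _ /eq_col_mx[E0h1 Uh1].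
have Xh : X *m block_mx h1 0 0 1%:M = col_mx (row_mx T 1%:M) (row_mx A 0).
  rewrite /X /X_mx mul_col_mx !mul_row_block E0h1 Uh1.
  by rewrite !(mulmx0, mul0mx, addr0, add0r, mulmx1).
apply/eqmxP; rewrite -(eq_leqif (mxrank_leqif_eq _)); last by rewrite Xh col_mx_sub TY AY.
rewrite mxrankMfree ?(eqP X_free) ?(eqP freeY) // row_free_unit.
by rewrite unitmxE det_ublock det1 mulr1 -unitmxE (isometry_unit Bu h1B).
Qed.

Lemma SO_W_factor g : SO_mx (W_gram B E0) g ->
  exists p h : 'M_(n + m), [/\ PX_mx B E0 U p, H_mx B E0 h & g = p *m h].
Proof.
case/andP=> /eqP gW /eqP dg.
have gu : g \in unitmx by rewrite unitmxE dg unitr1.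
have freeXg : row_free (X *m g).
  by rewrite /row_free mxrankMfree ?row_free_unit ?(eqP X_free).
have isoXg : X *m g *m W *m (X *m g)^T = 0.
  by rewrite form_mulmr -(mulmxA X) -(mulmxA X) gW X_isotropic.
have [h1 h1B Xh] := lagrangian_transitive freeXg isoXg.
set h := block_mx h1 0 0 (1%:M : 'M_m).
have hW : h *m W *m h^T = W by rewrite isometry_block // trmx1 mulmx1 mul1mx.
have hu := isometry_unit W_unit hW.
set p := g *m invmx h.
have pW : p *m W *m p^T = W by rewrite isometry_mul ?isometry_inv.
have Xp : (X *m p :=: X)%MS.
  rewrite /p mulmxA; apply: eqmx_trans (eqmxMr _ (eqmx_sym Xh)) _.
  by rewrite mulmxK.
have dp : \det p = 1.
  apply: det_lagrangian_stabilizer dim_W W_unit W_sym X_free X_isotropic pW _.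
  by rewrite Xp.
exists p, h; split; last by rewrite mulmxKV.
- by rewrite /PX_mx /SO_mx /isometry_mx -/W pW dp !eqxx /=; apply/eqmxP.
exists h1, 1%:M; split=> //.
  rewrite /SO_mx /isometry_mx h1B eqxx /=.
  move: dp; rewrite /p det_mulmx det_inv dg mul1r /h det_ublock det1 mulr1.
  by move/eqP; rewrite invr_eq1.
by rewrite /SO_mx /isometry_mx trmx1 mulmx1 mul1mx det1 !eqxx.
Qed.

End SplitQuadraticSpace.

Theorem lemma5p3 (F : fieldType) (n m r : nat)
  (B : 'M[F]_n) (Uv U : 'M[F]_(r, n)) (E0 : 'M[F]_(m, n)) :
  (2%:R : F) != 0 ->
  B^T = B ->
  B \in unitmx ->
  row_free U -> row_free Uv ->
  U *m B *m U^T = 0 -> Uv *m B *m Uv^T = 0 ->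
  Uv *m B *m U^T \in unitmx ->
  row_free E0 ->
  (E0 :=: orth_mx B (col_mx Uv U))%MS ->
  (mxdirect (Uv + E0 + U) /\ (Uv + E0 + U :=: 1%:M)%MS) ->
  anisotropic_mx B E0 ->
  forall g : 'M[F]_(n + m),
    SO_mx (W_gram B E0) g <->
    exists p h : 'M[F]_(n + m), [/\ PX_mx B E0 U p, H_mx B E0 h & g = p *m h].
Proof.
move=> two sB Bu freeU _ isoU isoUv Ku _ eqE0 [_ V_full] anisoE0 g.
split=> [|[p [h [/andP[SOp _] [h1 [h2 [SO1 SO2 ->]]] ->]]]].
  exact: (SO_W_factor two sB Bu freeU isoU isoUv Ku eqE0 V_full anisoE0).
exact: SO_mx_mul SOp (SO_mx_block SO1 SO2).
Qed.
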